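(* Let $\mathcal{A}=\mathcal{R}*_K\mathcal{S}*_L\mathcal{T}\in\mathbb{C}^{I_1\times\cdots\times I_N\times J_1\times\cdots\times J_M}$, where $\mathcal{R}\in\mathbb{C}^{I_1\times\cdots\times I_N\times H_1\times\cdots\times H_K}$, $\mathcal{S}\in\mathbb{C}^{H_1\times\cdots\times H_K\times G_1\times\cdots\times G_L}$ and $\mathcal{T}\in\mathbb{C}^{G_1\times\cdots\times G_L\times J_1\times\cdots\times J_M}$. Then $$\mathcal{A}_{\pi\dagger}=\mathcal{T}^{\dagger}*_L(\mathcal{A}*_M\mathcal{T}^{\dagger})^{\dagger}*_N\mathcal{A}*_M(\mathcal{R}^{\dagger}*_N\mathcal{A})^{\dagger}*_K\mathcal{R}^{\dagger},$$ and $\mathcal{A}_{\pi\dagger}$ is the unique tensor $\mathcal{X}\in\mathbb{C}^{J_1\times\cdots\times J_M\times I_1\times\cdots\times I_N}$ such that $\mathcal{X}*_N\mathcal{A}*_M\mathcal{X}=\mathcal{X}$, $\mathcal{A}*_M\mathcal{X}=\mathcal{A}*_M(\mathcal{R}^{\dagger}*_N\mathcal{A})^{\dagger}*_K\mathcal{R}^{\dagger}$ and $\mathcal{X}*_N\mathcal{A}=\mathcal{T}^{\dagger}*_L(\mathcal{A}*_M\mathcal{T}^{\dagger})^{\dagger}*_N\mathcal{A}$.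
   Context: $\mathbb{C}^{I_1\times\cdots\times I_N}$ denotes the set of complex tensors of order $N$ and dimension $I_1\times\cdots\times I_N$. For $\mathcal{A}\in\mathbb{C}^{I_1\times\cdots\times I_N\times K_1\times\cdots\times K_N}$ and $\mathcal{B}\in\mathbb{C}^{K_1\times\cdots\times K_N\times J_1\times\cdots\times J_M}$, the Einstein product $\mathcal{A}*_N\mathcal{B}$ is defined by $(\mathcal{A}*_N\mathcal{B})_{i_1\dots i_N j_1\dots j_M}=\sum_{k_1,\dots,k_N}a_{i_1\dots i_N k_1\dots k_N}b_{k_1\dots k_N j_1\dots j_M}$; it is associative. $\mathcal{A}^H$ denotes the conjugate transpose (swap the two groups of indices and conjugate entries). For $\mathcal{A}\in\mathbb{C}^{I_1\times\cdots\times I_N\times J_1\times\cdots\times J_M}$ the Moore–Penrose inverse $\mathcal{A}^{\dagger}$ is the unique $\mathcal{X}\in\mathbb{C}^{J_1\times\cdots\times J_M\times I_1\times\cdots\times I_N}$ with $\mathcal{A}*_M\mathcal{X}*_N\mathcal{A}=\mathcal{A}$, $\mathcal{X}*_N\mathcal{A}*_M\mathcal{X}=\mathcal{X}$, $(\mathcal{A}*_M\mathcal{X})^H=\mathcal{A}*_M\mathcal{X}$, $(\mathcal{X}*_N\mathcal{A})^H=\mathcal{X}*_N\mathcal{A}$. Given the factorization $\mathcal{A}=\mathcal{R}*_K\mathcal{S}*_L\mathcal{T}$ as in the claim, the product Moore–Penrose inverse of $\mathcal{A}$ (relative to this factorization) is $\mathcal{A}_{\pi\dagger}=\mathcal{T}^{\dagger}*_L(\mathcal{R}^{\dagger}*_N\mathcal{A}*_M\mathcal{T}^{\dagger})^{\dagger}*_K\mathcal{R}^{\dagger}$.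 *)

From HB Require Import structures.
From mathcomp Require Import all_boot all_order all_algebra.
From mathcomp Require Import complex.
From mathcomp Require Import reals.
From Stdlib Require Import ClassicalEpsilon.
Set Implicit Arguments. Unset Strict Implicit. Unset Printing Implicit Defensive.
Import Order.TTheory GRing.Theory Num.Theory.
Local Open Scope ring_scope.

Definition mindex (n : nat) (d : 'I_n -> nat) : finType :=
  {dffun forall k : 'I_n, 'I_(d k)}.

Definition tensor (C : Type) (N : nat) (I : 'I_N -> nat) (M : nat) (J : 'I_M -> nat) :=
  {ffun mindex I * mindex J -> C}.

Section Tensors.
Variable R : realType.
Local Notation C := R[i].

Definition einstein N (I : 'I_N -> nat) K (H : 'I_K -> nat) M (J : 'I_M -> nat)
  (A : tensor C I H) (B : tensor C H J) : tensor C I J :=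
  [ffun ij => \sum_(h : mindex H) A (ij.1, h) * B (h, ij.2)].

Definition ctr N (I : 'I_N -> nat) M (J : 'I_M -> nat) (A : tensor C I J) : tensor C J I :=
  [ffun ji => (A (ji.2, ji.1))^*].

Definition is_MP N (I : 'I_N -> nat) M (J : 'I_M -> nat)
  (A : tensor C I J) (X : tensor C J I) : Prop :=
  [/\ einstein (einstein A X) A = A,
      einstein (einstein X A) X = X,
      ctr (einstein A X) = einstein A X
    & ctr (einstein X A) = einstein X A].

Definition mpinv N (I : 'I_N -> nat) M (J : 'I_M -> nat) (A : tensor C I J) : tensor C J I :=
  epsilon (inhabits 0) (is_MP A).

Definition pmpinv N (I : 'I_N -> nat) M (J : 'I_M -> nat)
  K (H : 'I_K -> nat) L (G : 'I_L -> nat)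
  (Rt : tensor C I H) (A : tensor C I J) (T : tensor C G J) : tensor C J I :=
  einstein (einstein (mpinv T) (mpinv (einstein (einstein (mpinv Rt) A) (mpinv T))))
           (mpinv Rt).

End Tensors.

From HB Require Import structures.
From mathcomp Require Import all_boot all_order all_algebra.
From mathcomp Require Import complex.
From mathcomp Require Import reals.
From Stdlib Require Import ClassicalEpsilon.
Set Implicit Arguments. Unset Strict Implicit. Unset Printing Implicit Defensive.
Import Order.TTheory GRing.Theory Num.Theory.
Local Open Scope ring_scope.

(* With A = R S T, the tensors R^dag A and R^dag A T^dag have the same range,
   and A T^dag and R^dag A T^dag the same co-range, so the corresponding
   orthogonal projectors coincide.  Multiplying out, X0 := A_{pi dag}
   satisfies A X0 = A (R^dag A)^dag R^dag, X0 A = T^dag (A T^dag)^dag A and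
   X0 A X0 = X0.  An outer inverse X of A (X A X = X) is determined by A X
   and X A, which gives both the formula and the uniqueness.  Moore-Penrose
   inverses exist by Zlobec's formula A^dag = A^H (A^H A A^H)^- A^H, with an
   inner inverse ^- of the matricization. *)

Local Notation "A ** B" := (einstein A B) (at level 40, left associativity).
Local Notation "A ^H" := (ctr A) (at level 8).

Section TensorAlgebra.

Variable R : realType.
Local Notation C := R[i].

Lemma einsteinA n1 (I1 : 'I_n1 -> nat) n2 (I2 : 'I_n2 -> nat)
    n3 (I3 : 'I_n3 -> nat) n4 (I4 : 'I_n4 -> nat)
    (A : tensor C I1 I2) (B : tensor C I2 I3) (D : tensor C I3 I4) :
  A ** B ** D = A ** (B ** D).
Proof.
apply/ffunP => -[x y]; rewrite !ffunE /=.
under eq_bigr do rewrite ffunE /= mulr_suml.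
under [RHS]eq_bigr do rewrite ffunE /= mulr_sumr.
rewrite exchange_big /=; apply: eq_bigr => h _; apply: eq_bigr => g _.
by rewrite mulrA.
Qed.

Lemma einsteinBr n1 (I1 : 'I_n1 -> nat) n2 (I2 : 'I_n2 -> nat)
    n3 (I3 : 'I_n3 -> nat) (A : tensor C I1 I2) (B D : tensor C I2 I3) :
  A ** (B - D) = A ** B - A ** D.
Proof.
apply/ffunP => -[x y]; rewrite !ffunE /= -sumrB; apply: eq_bigr => h _.
by rewrite !ffunE mulrBr.
Qed.

Lemma einsteinBl n1 (I1 : 'I_n1 -> nat) n2 (I2 : 'I_n2 -> nat)
    n3 (I3 : 'I_n3 -> nat) (A B : tensor C I1 I2) (D : tensor C I2 I3) :
  (A - B) ** D = A ** D - B ** D.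
Proof.
apply/ffunP => -[x y]; rewrite !ffunE /= -sumrB; apply: eq_bigr => h _.
by rewrite !ffunE mulrBl.
Qed.

Lemma einstein0r n1 (I1 : 'I_n1 -> nat) n2 (I2 : 'I_n2 -> nat)
    n3 (I3 : 'I_n3 -> nat) (A : tensor C I1 I2) :
  A ** (0 : tensor C I2 I3) = 0.
Proof.
apply/ffunP => -[x y]; rewrite !ffunE /=; apply: big1 => h _.
by rewrite !ffunE mulr0.
Qed.

Lemma ctrK n1 (I1 : 'I_n1 -> nat) n2 (I2 : 'I_n2 -> nat)
    (A : tensor C I1 I2) : A^H^H = A.
Proof. by apply/ffunP => -[x y]; rewrite !ffunE /= conjCK. Qed.

Lemma ctrB n1 (I1 : 'I_n1 -> nat) n2 (I2 : 'I_n2 -> nat)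
    (A B : tensor C I1 I2) : (A - B)^H = A^H - B^H.
Proof. by apply/ffunP => -[x y]; rewrite !ffunE /= rmorphB. Qed.

Lemma ctr_einstein n1 (I1 : 'I_n1 -> nat) n2 (I2 : 'I_n2 -> nat)
    n3 (I3 : 'I_n3 -> nat) (A : tensor C I1 I2) (B : tensor C I2 I3) :
  (A ** B)^H = B^H ** A^H.
Proof.
apply/ffunP => -[x y]; rewrite !ffunE /= rmorph_sum; apply: eq_bigr => h _.
by rewrite !ffunE /= rmorphM mulrC.
Qed.

Lemma ctr_einstein_eq0 n1 (I1 : 'I_n1 -> nat) n2 (I2 : 'I_n2 -> nat)
    (B : tensor C I1 I2) : B^H ** B = 0 -> B = 0.
Proof.
move=> BHB0; apply/ffunP => -[x y].
have := congr1 (fun F : tensor C I2 I2 => F (y, y)) BHB0.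
rewrite !ffunE /= => /eqP.
rewrite psumr_eq0 => [/allP/(_ x (mem_index_enum x))|z _].
  by rewrite ffunE /= mulrC mul_conjC_eq0 => /eqP.
by rewrite ffunE /= mulrC mul_conjC_ge0.
Qed.

Lemma einstein_ctrl_cancel n1 (I1 : 'I_n1 -> nat) n2 (I2 : 'I_n2 -> nat)
    n3 (I3 : 'I_n3 -> nat) (A : tensor C I1 I2) (U V : tensor C I2 I3) :
  A^H ** A ** U = A^H ** A ** V -> A ** U = A ** V.
Proof.
move=> eUV; apply/eqP; rewrite -subr_eq0; apply/eqP/ctr_einstein_eq0.
by rewrite -einsteinBr ctr_einstein einsteinA -(einsteinA A^H) einsteinBr eUV
  subrr !einstein0r.
Qed.

Lemma einstein_ctrr_cancel n1 (I1 : 'I_n1 -> nat) n2 (I2 : 'I_n2 -> nat)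
    n3 (I3 : 'I_n3 -> nat) (A : tensor C I2 I3) (U V : tensor C I1 I2) :
  U ** A ** A^H = V ** A ** A^H -> U ** A = V ** A.
Proof.
move=> /(congr1 (@ctr _ _ _ _ _)); rewrite !ctr_einstein ctrK -!einsteinA.
by rewrite -{1 3}[A]ctrK => /einstein_ctrl_cancel/(congr1 (@ctr _ _ _ _ _));
  rewrite !ctr_einstein !ctrK.
Qed.

Lemma einstein_ctrl_id n1 (I1 : 'I_n1 -> nat) n2 (I2 : 'I_n2 -> nat)
    (A : tensor C I1 I2) (W : tensor C I2 I2) :
  A^H ** (A ** W) = A^H ** A -> A ** W = A.
Proof.
move=> eW; apply/eqP; rewrite -subr_eq0; apply/eqP/ctr_einstein_eq0.
have AHD0 : A^H ** (A ** W - A) = 0 by rewrite einsteinBr eW subrr.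
by rewrite ctrB ctr_einstein einsteinBl einsteinA AHD0 !einstein0r subrr.
Qed.

Lemma einstein_zlobec n1 (I1 : 'I_n1 -> nat) n2 (I2 : 'I_n2 -> nat)
    (A : tensor C I1 I2) (Y : tensor C I1 I2) :
  let W := A^H ** A ** A^H in
  W ** Y ** W = W -> A ** (A^H ** Y ** A^H) ** A = A.
Proof.
move=> W WYW; rewrite einsteinA; apply: einstein_ctrl_id.
have := einstein_ctrr_cancel (A := A) (V := A^H)
  (U := A^H ** A ** A^H ** Y ** A^H).
by rewrite !einsteinA => -> //; rewrite /W !einsteinA in WYW.
Qed.

Lemma is_MP_range n1 (I1 : 'I_n1 -> nat) n2 (I2 : 'I_n2 -> nat)
    (A : tensor C I1 I2) (X : tensor C I2 I1) (Z : tensor C I1 I2) :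
  A ** X ** A = A -> X = A^H ** Z ** A^H -> is_MP A X.
Proof.
move=> AXA XE.
have AH : A^H ** (X^H ** A^H) = A^H by rewrite -!ctr_einstein AXA.
have AXH : (A ** X)^H = A ** X.
  have AXE : A ** X = A ** X ** (A ** X)^H.
    by rewrite ctr_einstein {1}XE -{2}AH XE !einsteinA.
  by rewrite AXE ctr_einstein ctrK.
have XAH : (X ** A)^H = X ** A.
  have XAE : X ** A = (X ** A)^H ** (X ** A).
    by rewrite ctr_einstein {1}XE -{1}AH XE !einsteinA.
  by rewrite XAE ctr_einstein ctrK.
split=> //.
by rewrite einsteinA -AXH ctr_einstein {1}XE !einsteinA AH -einsteinA -XE.
Qed.

Definition mx_of_tensor n1 (I1 : 'I_n1 -> nat) n2 (I2 : 'I_n2 -> nat)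
    (A : tensor C I1 I2) : 'M[C]_(#|mindex I1|, #|mindex I2|) :=
  \matrix_(x, y) A (enum_val x, enum_val y).

Definition tensor_of_mx n1 (I1 : 'I_n1 -> nat) n2 (I2 : 'I_n2 -> nat)
    (B : 'M[C]_(#|mindex I1|, #|mindex I2|)) : tensor C I1 I2 :=
  [ffun xy => B (enum_rank xy.1) (enum_rank xy.2)].

Lemma mx_of_tensorK n1 (I1 : 'I_n1 -> nat) n2 (I2 : 'I_n2 -> nat) :
  cancel (@mx_of_tensor n1 I1 n2 I2) (@tensor_of_mx n1 I1 n2 I2).
Proof. by move=> A; apply/ffunP => -[x y]; rewrite !ffunE mxE !enum_rankK. Qed.

Lemma tensor_of_mxK n1 (I1 : 'I_n1 -> nat) n2 (I2 : 'I_n2 -> nat) :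
  cancel (@tensor_of_mx n1 I1 n2 I2) (@mx_of_tensor n1 I1 n2 I2).
Proof. by move=> B; apply/matrixP => x y; rewrite mxE ffunE /= !enum_valK. Qed.

Lemma mx_of_tensor_einstein n1 (I1 : 'I_n1 -> nat) n2 (I2 : 'I_n2 -> nat)
    n3 (I3 : 'I_n3 -> nat) (A : tensor C I1 I2) (B : tensor C I2 I3) :
  mx_of_tensor (A ** B) = mx_of_tensor A *m mx_of_tensor B.
Proof.
apply/matrixP => x y; rewrite !mxE ffunE /=.
rewrite (reindex (@enum_val (mindex I2) predT)) /=; last first.
  exact/onW_bij/enum_val_bij.
by apply: eq_bigr => h _; rewrite !mxE.
Qed.

Lemma einstein_inner_inverse n1 (I1 : 'I_n1 -> nat) n2 (I2 : 'I_n2 -> nat)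
    (A : tensor C I1 I2) : exists Y : tensor C I2 I1, A ** Y ** A = A.
Proof.
exists (tensor_of_mx (pinvmx (mx_of_tensor A))).
apply: (can_inj (@mx_of_tensorK _ _ _ _)).
by rewrite !mx_of_tensor_einstein tensor_of_mxK mulmxKpV.
Qed.

Lemma mpinvP n1 (I1 : 'I_n1 -> nat) n2 (I2 : 'I_n2 -> nat)
    (A : tensor C I1 I2) : is_MP A (mpinv A).
Proof.
apply: (epsilon_spec (inhabits 0) (is_MP A)).
have [Y WYW] := einstein_inner_inverse (A^H ** A ** A^H).
by exists (A^H ** Y ** A^H); apply: is_MP_range (einstein_zlobec WYW) _.
Qed.

Lemma herm_proj_eq n1 (I1 : 'I_n1 -> nat) (P Q : tensor C I1 I1) :
  P^H = P -> Q^H = Q -> P ** Q = Q -> Q ** P = P -> P = Q.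
Proof. by move=> PH QH PQ QP; rewrite -PH -QP ctr_einstein PH QH PQ. Qed.

Lemma range_proj_eq n1 (I1 : 'I_n1 -> nat) n2 (I2 : 'I_n2 -> nat)
    n3 (I3 : 'I_n3 -> nat) (B : tensor C I1 I3) (D : tensor C I1 I2)
    (u : tensor C I2 I3) (v : tensor C I3 I2) :
  B = D ** u -> D = B ** v -> D ** mpinv D = B ** mpinv B.
Proof.
move=> BE DE; have [BbB _ BbH _] := mpinvP B; have [DdD _ DdH _] := mpinvP D.
have DdB : D ** mpinv D ** B = B by rewrite BE -einsteinA DdD.
have BbD : B ** mpinv B ** D = D by rewrite DE -einsteinA BbB.
by apply: herm_proj_eq; rewrite // -einsteinA ?DdB ?BbD.
Qed.

Lemma corange_proj_eq n1 (I1 : 'I_n1 -> nat) n2 (I2 : 'I_n2 -> nat)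
    n3 (I3 : 'I_n3 -> nat) (B : tensor C I3 I2) (D : tensor C I1 I2)
    (u : tensor C I3 I1) (v : tensor C I1 I3) :
  B = u ** D -> D = v ** B -> mpinv D ** D = mpinv B ** B.
Proof.
move=> BE DE; have [BbB _ _ BbH] := mpinvP B; have [DdD _ _ DdH] := mpinvP D.
have BdD : B ** (mpinv D ** D) = B by rewrite BE einsteinA -(einsteinA D) DdD.
have DbB : D ** (mpinv B ** B) = D by rewrite DE einsteinA -(einsteinA B) BbB.
apply: herm_proj_eq => //.
  by rewrite -DdH -BbH -ctr_einstein einsteinA BdD BbH.
by rewrite -DdH -BbH -ctr_einstein einsteinA DbB DdH.
Qed.

Lemma outer_inverse_unique n1 (I1 : 'I_n1 -> nat) n2 (I2 : 'I_n2 -> nat)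
    (A : tensor C I1 I2) (X Y : tensor C I2 I1) :
  X ** A ** X = X -> Y ** A ** Y = Y -> A ** X = A ** Y -> X ** A = Y ** A ->
  X = Y.
Proof.
by move=> XAX YAY AXY XAY; rewrite -XAX einsteinA AXY -einsteinA XAY YAY.
Qed.

End TensorAlgebra.

Theorem theorem3p4 (R : realType)
  (N : nat) (I : 'I_N -> nat) (M : nat) (J : 'I_M -> nat)
  (K : nat) (H : 'I_K -> nat) (L : nat) (G : 'I_L -> nat)
  (Rt : tensor R[i] I H) (S : tensor R[i] H G) (T : tensor R[i] G J) :
  let A := einstein (einstein Rt S) T in
  pmpinv Rt A T =
    einstein (einstein (einstein (einstein (mpinv T) (mpinv (einstein A (mpinv T)))) A)
                       (mpinv (einstein (mpinv Rt) A)))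
             (mpinv Rt)
  /\ (forall X : tensor R[i] J I,
        [/\ einstein (einstein X A) X = X,
            einstein A X = einstein (einstein A (mpinv (einstein (mpinv Rt) A))) (mpinv Rt)
          & einstein X A = einstein (einstein (mpinv T) (mpinv (einstein A (mpinv T)))) A]
        <-> X = pmpinv Rt A T).
Proof.
move=> A; rewrite /pmpinv; set r := mpinv Rt; set t := mpinv T.
have RrA : Rt ** r ** A = A.
  by have [RrR _ _ _] := mpinvP Rt; rewrite /A -!einsteinA RrR.
have AtT : A ** (t ** T) = A.
  by have [TtT _ _ _] := mpinvP T; rewrite /A !einsteinA -(einsteinA T) TtT.
clearbody A; have [_ bXb _ _] := mpinvP (r ** A ** t).
set b := mpinv (r ** A ** t) in bXb *; set X0 := t ** b ** r.
have AX0 : A ** mpinv (r ** A) ** r = A ** X0.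
  have rAc : r ** A ** mpinv (r ** A) = r ** A ** t ** b.
    by apply: (range_proj_eq (v := T) (erefl _)); rewrite !einsteinA AtT.
  have := congr1 (fun Z => Rt ** Z ** r) rAc.
  by rewrite /X0 -!einsteinA RrA => ->.
have X0A : t ** mpinv (A ** t) ** A = X0 ** A.
  have dAt : mpinv (A ** t) ** (A ** t) = b ** (r ** A ** t).
    apply: (corange_proj_eq (v := Rt) (einsteinA r A t)).
    by rewrite -!einsteinA RrA.
  have := congr1 (fun Z => t ** Z ** T) dAt.
  by rewrite /X0 !einsteinA AtT => ->.
have X0AX0 : X0 ** A ** X0 = X0.
  have := congr1 (fun Z => t ** Z ** r) bXb.
  by rewrite /X0 !einsteinA => ->.
split.
  by rewrite X0A (einsteinA X0) einsteinA AX0 -einsteinA X0AX0.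
move=> X; split=> [[XAX AX XA]|->]; last by rewrite AX0 X0A.
by apply: (outer_inverse_unique XAX X0AX0); rewrite ?AX ?XA.
Qed.
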